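(* Let $a_2>1$ and let $Y^{(1)},Y^{(2)}$ be independent $\chi^2_1$ random variables, and let $h$ be the density of $U=Y^{(1)}+a_2Y^{(2)}$. With $c_2=1-a_2^{-1}$, $p_0=a_2^{-1/2}$, $p_1=\tfrac12c_2p_0$, $p_2=\tfrac38c_2^2p_0$, one has $$\lim_{u\to0+}\big[h(u)h''(u)-\{h'(u)\}^2\big]=\frac{p_0p_2-p_1^2}{16}>0,$$ so $h$ is not log-concave on $(0,\infty)$, although the cdf of $U$ is. *)

From Stdlib Require Import Reals.
Open Scope R_scope.

(* Density of a chi^2_1 random variable (used only for y > 0). *)
Definition chi2_1_pdf (y : R) : R := / sqrt (2 * PI) * / sqrt y * exp (- y / 2).

Definition scaled_chi2_1_pdf (a s : R) : R := chi2_1_pdf (s / a) / a.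

Definition improper_int (f : R -> R) (a b I : R) : Prop :=
  (forall x y, a < x -> x <= y -> y < b -> inhabited (Riemann_integrable f x y)) /\
  (forall eps, 0 < eps -> exists delta, 0 < delta /\
     forall x y (pr : Riemann_integrable f x y),
       a < x < a + delta -> b - delta < y < b -> x <= y ->
       Rabs (RiemannInt pr - I) < eps).

(* Density of U = Y1 + a Y2 (Y1, Y2 iid chi^2_1) as the convolution
   h(u) = int_0^u f_{Y1}(t) f_{a Y2}(u - t) dt, for u > 0. *)
Definition is_density_sum (a : R) (h : R -> R) : Prop :=
  forall u, 0 < u ->
    improper_int (fun t => chi2_1_pdf t * scaled_chi2_1_pdf a (u - t)) 0 u (h u).

Definition right_lim0 (g : R -> R) (L : R) : Prop :=
  forall eps, 0 < eps -> exists delta, 0 < delta /\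
    forall u, 0 < u < delta -> Rabs (g u - L) < eps.

(* Log-concavity on (0, oo) (for positive functions). *)
Definition log_concave_pos (f : R -> R) : Prop :=
  forall x y l, 0 < x -> 0 < y -> 0 <= l <= 1 ->
    l * ln (f x) + (1 - l) * ln (f y) <= ln (f (l * x + (1 - l) * y)).

From Stdlib Require Import Reals Lra Psatz.
From Coquelicot Require Import Coquelicot.
Open Scope R_scope.

(* Substituting t = u (1 - cos p) / 2 in the convolution integral defining h
   removes the endpoint singularities and gives, for u > 0,
       h(u) = K I_0(u),   I_k(u) = int_0^PI q(p)^k exp(-u q(p)) dp,
   with K = 1 / (2 PI sqrt a) and q(p) = (1 - cos p)/4 + (1 + cos p)/(4a) > 0.
   Differentiating under the integral sign, I_k' = - I_(k+1), so h extends to a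
   smooth function on R with h' = - K I_1, h'' = K I_2 and
       h h'' - h'^2 = K^2 (I_0 I_2 - I_1^2),
   continuous at 0, where the moments are elementary trigonometric integrals;
   the limit is K^2 PI^2 (1 - 1/a)^2 / 32 > 0.  Hence ln h is strictly convex
   near 0 and h is not log-concave, while the cdf, whose derivative h is
   decreasing, is concave and therefore log-concave. *)

Lemma eq_of_close x y : (forall e, 0 < e -> Rabs (x - y) < e) -> x = y.
Proof.
  intros H; destruct (Req_dec (x - y) 0) as [E|E]; [lra|].
  specialize (H (Rabs (x - y)) (Rabs_pos_lt _ E)); lra.
Qed.

Lemma continuous_near (f : R -> R) x e :
  continuous f x -> 0 < e -> locally x (fun y => Rabs (f y - f x) < e).
Proof.
  intros Hf He; apply (Hf (fun z => Rabs (z - f x) < e)).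
  exists (mkposreal e He); intros z Hz; exact Hz.
Qed.

Lemma locally_right_point (P : R -> Prop) x r :
  0 < r -> locally x P -> exists y, x < y < x + r /\ P y.
Proof.
  intros Hr [e He]; exists (x + Rmin (e / 2) (r / 2)).
  pose proof (cond_pos e); pose proof (Rmin_l (e / 2) (r / 2));
    pose proof (Rmin_r (e / 2) (r / 2)).
  assert (0 < Rmin (e / 2) (r / 2)) by (apply Rmin_glb_lt; lra).
  split; [lra|]; apply He; change (Rabs (x + Rmin (e / 2) (r / 2) - x) < e).
  rewrite Rabs_right; lra.
Qed.

Lemma locally_left_point (P : R -> Prop) x r :
  0 < r -> locally x P -> exists y, x - r < y < x /\ P y.
Proof.
  intros Hr [e He]; exists (x - Rmin (e / 2) (r / 2)).
  pose proof (cond_pos e); pose proof (Rmin_l (e / 2) (r / 2));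
    pose proof (Rmin_r (e / 2) (r / 2)).
  assert (0 < Rmin (e / 2) (r / 2)) by (apply Rmin_glb_lt; lra).
  split; [lra|]; apply He; change (Rabs (x - Rmin (e / 2) (r / 2) - x) < e).
  rewrite Rabs_left; lra.
Qed.

Lemma RInt_from_continuous (F : R -> R) c p :
  (forall x, continuous F x) -> continuous (RInt F c) p.
Proof.
  intros HF; apply (@ex_derive_continuous R_AbsRing R_NormedModule).
  exists (F p); apply (is_derive_RInt F (RInt F c) c p); [|apply HF].
  apply filter_forall; intros q; apply (@RInt_correct R_CompleteNormedModule).
  apply (@ex_RInt_continuous R_CompleteNormedModule); intros; apply HF.
Qed.

Lemma RInt_difference (F : R -> R) c p q :
  (forall x, continuous F x) -> RInt F p q = RInt F c q - RInt F c p.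
Proof.
  intros HF.
  rewrite <- (RInt_Chasles (V := R_CompleteNormedModule) F c p q)
    by (apply (@ex_RInt_continuous R_CompleteNormedModule); intros; apply HF).
  unfold plus; simpl; generalize (RInt F c p) (RInt F p q); intros X Y; simpl in X, Y.
  ring.
Qed.

(* This handles the integrable endpoint
   singularities of the convolution integrand. *)
Lemma improper_int_subst (f F g : R -> R) (a b pa pb I : R) :
  pa < pb -> (forall p, continuous F p) ->
  g pa = a -> g pb = b -> continuous g pa -> continuous g pb ->
  (forall p q, pa <= p -> p < q -> q <= pb -> g p < g q) ->
  (forall p q, pa < p -> p <= q -> q < pb -> RInt f (g p) (g q) = RInt F p q) ->
  improper_int f a b I -> I = RInt F pa pb.
Proof.
  intros Hab HF Ha Hb Hga Hgb Hmono Hsubst [Hint Hlim].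
  set (Phi := RInt F pa).
  assert (HPhi : forall p, continuous Phi p) by (intros; apply RInt_from_continuous, HF).
  assert (HChasles : forall p q, RInt F p q = Phi q - Phi p)
    by (intros; apply RInt_difference, HF).
  apply eq_of_close; intros eps Heps.
  (* Pick pa < p < q < pb so close to the endpoints that g p, g q lie within the
     delta of the improper integral and Phi p, Phi q within eps/3 of Phi pa, Phi pb. *)
  destruct (Hlim (eps / 3) ltac:(lra)) as [d [Hd Hd']].
  destruct (locally_right_point _ pa (pb - pa) ltac:(lra)
    (filter_and _ _ (continuous_near g pa d Hga Hd)
                    (continuous_near Phi pa (eps / 3) (HPhi pa) ltac:(lra))))
    as [p [Hp [Hgp HPp]]].
  destruct (locally_left_point _ pb (pb - p) ltac:(lra)
    (filter_and _ _ (continuous_near g pb d Hgb Hd)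
                    (continuous_near Phi pb (eps / 3) (HPhi pb) ltac:(lra))))
    as [q [Hq [Hgq HPq]]].
  assert (Hgpa : a < g p) by (rewrite <- Ha; apply Hmono; lra).
  assert (Hgqb : g q < b) by (rewrite <- Hb; apply Hmono; lra).
  assert (Hgpq : g p <= g q) by (left; apply Hmono; lra).
  rewrite Ha in Hgp; rewrite Hb in Hgq.
  apply Rabs_def2 in Hgp; apply Rabs_def2 in Hgq.
  destruct (Hint (g p) (g q) Hgpa Hgpq Hgqb) as [pr].
  specialize (Hd' (g p) (g q) pr ltac:(lra) ltac:(lra) Hgpq).
  rewrite <- RInt_Reals, Hsubst, HChasles in Hd' by lra.
  unfold Phi in *; rewrite RInt_point in HPp; unfold zero in HPp; simpl in HPp.
  apply Rabs_def2 in Hd'; apply Rabs_def2 in HPp; apply Rabs_def2 in HPq.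
  apply Rabs_def1; lra.
Qed.

Lemma improper_int_continuous (f G : R -> R) (a b I : R) :
  a < b -> (forall x, continuous G x) -> (forall t, a < t < b -> f t = G t) ->
  improper_int f a b I -> I = RInt G a b.
Proof.
  intros Hab HG Hfg Hf.
  apply (improper_int_subst f G (fun x => x) a b a b I); auto using continuous_id.
  intros p q Hp Hpq Hq; apply RInt_ext; intros t Ht.
  rewrite Rmin_left, Rmax_right in Ht by lra; apply Hfg; lra.
Qed.

Lemma derivable_pt_lim_pos_ext (f g : R -> R) u l :
  (forall t, 0 < t -> f t = g t) -> 0 < u ->
  derivable_pt_lim g u l -> derivable_pt_lim f u l.
Proof.
  intros Hfg Hu Hg; apply is_derive_Reals; apply is_derive_Reals in Hg.
  apply (is_derive_ext_loc g f); [|exact Hg].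
  apply (filter_imp (fun t => 0 < t)); [intros t Ht; symmetry; auto|].
  apply open_gt; auto.
Qed.

Lemma right_lim0_continuous (f g : R -> R) :
  continuous g 0 -> (forall u, 0 < u -> f u = g u) -> right_lim0 f (g 0).
Proof.
  intros Hg Hfg eps Heps.
  destruct (continuous_near g 0 eps Hg Heps) as [d Hd].
  exists d; split; [apply cond_pos|]; intros u Hu; rewrite Hfg by lra; apply Hd.
  change (Rabs (u - 0) < d); rewrite Rminus_0_r, Rabs_right; lra.
Qed.

Lemma right_lim0_pos_near (g : R -> R) L :
  right_lim0 g L -> 0 < L -> exists d, 0 < d /\ forall u, 0 < u < d -> 0 < g u.
Proof.
  intros Hg HL; destruct (Hg L HL) as [d [Hd Hd']].
  exists d; split; auto; intros u Hu; specialize (Hd' u Hu).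
  apply Rabs_def2 in Hd'; lra.
Qed.

Lemma RInt_le_tangent (G : R -> R) z v :
  (forall x, continuous G x) ->
  (forall x y, Rmin z v <= x <= y -> y <= Rmax z v -> G y <= G x) ->
  RInt G z v <= (v - z) * G z.
Proof.
  intros HG Hdec.
  assert (HI : forall x y, ex_RInt G x y)
    by (intros; apply (@ex_RInt_continuous R_CompleteNormedModule); intros; apply HG).
  destruct (Rle_or_lt z v) as [Hzv|Hvz].
  - rewrite Rmin_left, Rmax_right in Hdec by lra.
    rewrite <- (RInt_const (V := R_CompleteNormedModule)).
    apply RInt_le; auto using ex_RInt_const; intros x Hx; apply Hdec; lra.
  - rewrite Rmin_right, Rmax_left in Hdec by lra.
    assert ((z - v) * G z <= RInt G v z).
    { rewrite <- (RInt_const (V := R_CompleteNormedModule)).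
      apply RInt_le; auto using ex_RInt_const; try lra; intros x Hx; apply Hdec; lra. }
    rewrite <- (opp_RInt_swap (V := R_CompleteNormedModule)) by auto.
    change (- RInt G v z <= (v - z) * G z); lra.
Qed.

Lemma ln_le_tangent s t : 0 < s -> 0 < t -> ln t <= ln s + (t - s) / s.
Proof.
  intros Hs Ht; pose proof (exp_ineq1_le (ln (t / s))) as He.
  rewrite exp_ln, ln_div in He by (auto; apply Rdiv_lt_0_compat; auto).
  replace ((t - s) / s) with (t / s - 1) by (field; lra); lra.
Qed.

Lemma log_concave_of_tangent (F g : R -> R) :
  (forall x, 0 < x -> 0 < F x) ->
  (forall v z, 0 < v -> 0 < z -> F v <= F z + (v - z) * g z) ->
  log_concave_pos F.
Proof.
  intros Hpos Htan x y l Hx Hy Hl.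
  set (z := l * x + (1 - l) * y).
  assert (Hz : 0 < z) by (unfold z; destruct (Rle_lt_or_eq_dec 0 l (proj1 Hl)); nra).
  pose proof (Hpos x Hx); pose proof (Hpos y Hy); pose proof (Hpos z Hz).
  pose proof (Htan x z Hx Hz); pose proof (Htan y z Hy Hz).
  pose proof (ln_le_tangent (F z) (F x)); pose proof (ln_le_tangent (F z) (F y)).
  assert (Hmean : l * F x + (1 - l) * F y <= F z).
  { assert (l * (F z + (x - z) * g z) + (1 - l) * (F z + (y - z) * g z) = F z)
      by (unfold z; ring).
    assert (l * F x <= l * (F z + (x - z) * g z)) by (apply Rmult_le_compat_l; lra).
    assert ((1 - l) * F y <= (1 - l) * (F z + (y - z) * g z))
      by (apply Rmult_le_compat_l; lra).
    lra. }
  assert (Hchord : l * ((F x - F z) / F z) + (1 - l) * ((F y - F z) / F z) <= 0).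
  { replace (l * ((F x - F z) / F z) + (1 - l) * ((F y - F z) / F z))
      with ((l * F x + (1 - l) * F y - F z) / F z) by (field; lra).
    unfold Rdiv; assert (0 < / F z) by (apply Rinv_0_lt_compat; lra); nra. }
  assert (l * ln (F x) <= l * (ln (F z) + (F x - F z) / F z))
    by (apply Rmult_le_compat_l; auto; lra).
  assert ((1 - l) * ln (F y) <= (1 - l) * (ln (F z) + (F y - F z) / F z))
    by (apply Rmult_le_compat_l; auto; lra).
  lra.
Qed.

Lemma strict_midpoint_convex (f f1 f2 : R -> R) m t : 0 < t ->
  (forall x, m - t <= x <= m + t ->
     derivable_pt_lim f x (f1 x) /\ derivable_pt_lim f1 x (f2 x) /\ 0 < f2 x) ->
  2 * f m < f (m - t) + f (m + t).
Proof.
  intros Ht H.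
  destruct (MVT_cor2 f f1 (m - t) m ltac:(lra)) as [c1 [E1 B1]];
    [intros c Hc; apply H; lra|].
  destruct (MVT_cor2 f f1 m (m + t) ltac:(lra)) as [c2 [E2 B2]];
    [intros c Hc; apply H; lra|].
  destruct (MVT_cor2 f1 f2 c1 c2 ltac:(lra)) as [c3 [E3 B3]];
    [intros c Hc; apply H; lra|].
  assert (0 < f2 c3) by (apply H; lra).
  assert (0 < f1 c2 - f1 c1) by (rewrite E3; apply Rmult_lt_0_compat; lra).
  replace (m - (m - t)) with t in E1 by ring; replace (m + t - m) with t in E2 by ring.
  nra.
Qed.

Lemma log_derivatives (f f1 f2 : R -> R) x :
  derivable_pt_lim f x (f1 x) -> derivable_pt_lim f1 x (f2 x) -> 0 < f x ->
  derivable_pt_lim (fun u => ln (f u)) x (f1 x / f x) /\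
  derivable_pt_lim (fun u => f1 u / f u) x ((f2 x * f x - f1 x * f1 x) / (f x)²).
Proof.
  intros Hf Hf1 Hpos; split.
  - replace (f1 x / f x) with (/ f x * f1 x) by (field; lra).
    exact (derivable_pt_lim_comp f ln x _ _ Hf (derivable_pt_lim_ln _ Hpos)).
  - exact (derivable_pt_lim_div f1 f x _ _ Hf1 Hf ltac:(lra)).
Qed.

(* If f f'' - f'^2 > 0 on (0, d), then ln f is strictly convex there, so f is
   not log-concave on (0, oo). *)
Lemma not_log_concave_near0 (f f1 f2 : R -> R) d : 0 < d ->
  (forall x, 0 < x < d ->
     derivable_pt_lim f x (f1 x) /\ derivable_pt_lim f1 x (f2 x) /\
     0 < f x /\ 0 < f x * f2 x - f1 x ^ 2) ->
  ~ log_concave_pos f.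
Proof.
  intros Hd H LC.
  assert (Hconv : 2 * ln (f (d / 2)) < ln (f (d / 2 - d / 4)) + ln (f (d / 2 + d / 4))).
  { apply (strict_midpoint_convex (fun u => ln (f u)) (fun u => f1 u / f u)
      (fun u => (f2 u * f u - f1 u * f1 u) / (f u)²)); [lra|].
    intros x Hx; destruct (H x ltac:(lra)) as [Hf [Hf1 [Hpos Hcurv]]].
    destruct (log_derivatives f f1 f2 x Hf Hf1 Hpos) as [D1 D2].
    repeat split; auto.
    apply Rdiv_lt_0_compat; [nra|apply Rlt_0_sqr; lra]. }
  specialize (LC (d / 4) (3 * d / 4) (1 / 2) ltac:(lra) ltac:(lra) ltac:(lra)).
  replace (1 / 2 * (d / 4) + (1 - 1 / 2) * (3 * d / 4)) with (d / 2) in LC by field.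
  replace (d / 2 - d / 4) with (d / 4) in Hconv by field.
  replace (d / 2 + d / 4) with (3 * d / 4) in Hconv by field.
  lra.
Qed.

Definition rate (a p : R) : R := (1 - cos p) / 4 + (1 + cos p) / (4 * a).

Definition kernel (a : R) (k : nat) (u p : R) : R := rate a p ^ k * exp (- u * rate a p).

Definition Imom (a : R) (k : nat) (u : R) : R := RInt (kernel a k u) 0 PI.

Lemma rate_pos a p : 1 < a -> 0 < rate a p.
Proof.
  intros Ha; pose proof (COS_bound p) as Hc.
  assert (E : rate a p = ((1 - cos p) * a + (1 + cos p)) / (4 * a))
    by (unfold rate; field; lra).
  rewrite E; apply Rdiv_lt_0_compat; nra.
Qed.

Lemma kernel_continuous a k u p : continuous (kernel a k u) p.
Proof.
  apply (@ex_derive_continuous R_AbsRing R_NormedModule).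
  unfold kernel, rate; auto_derive; auto.
Qed.

Lemma ex_RInt_kernel a k u x y : ex_RInt (kernel a k u) x y.
Proof. apply (@ex_RInt_continuous R_CompleteNormedModule); intros; apply kernel_continuous. Qed.

Lemma continuity_2d_pt_comp (g : R -> R) (f : R -> R -> R) x y :
  continuity_2d_pt f x y -> continuous g (f x y) ->
  continuity_2d_pt (fun u v => g (f u v)) x y.
Proof.
  rewrite !continuity_2d_pt_filterlim; intros Hf Hg.
  eapply filterlim_comp; eauto.
Qed.

Lemma continuity_2d_pt_rate_snd a (g : R -> R) x y :
  (forall z, continuous g z) -> continuity_2d_pt (fun _ v => g (rate a v)) x y.
Proof.
  intros Hg; apply (continuity_2d_pt_comp g (fun _ v => rate a v)); [|apply Hg].
  apply (continuity_2d_pt_comp (rate a) (fun _ v => v)); [apply continuity_2d_pt_id2|].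
  apply (@ex_derive_continuous R_AbsRing R_NormedModule); unfold rate; auto_derive; auto.
Qed.

Lemma Imom_derive a k u : is_derive (Imom a k) u (- Imom a (S k) u).
Proof.
  assert (HD : forall z p, Derive (fun z => kernel a k z p) z = - kernel a (S k) z p).
  { intros z p; apply is_derive_unique; unfold kernel; auto_derive; auto; simpl; ring. }
  unfold Imom.
  rewrite <- (RInt_opp (V := R_CompleteNormedModule)) by apply ex_RInt_kernel.
  rewrite <- (RInt_ext (fun p => Derive (fun z => kernel a k z p) u))
    by (intros p _; apply HD).
  apply (is_derive_RInt_param (fun z p => kernel a k z p)).
  - apply filter_forall; intros z p _; unfold kernel; auto_derive; auto.
  - intros p _; eapply continuity_2d_pt_ext; [intros; symmetry; apply HD|].
    unfold kernel; apply continuity_2d_pt_opp, continuity_2d_pt_mult.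
    + apply (continuity_2d_pt_rate_snd a (fun r => r ^ S k)); intros z.
      apply (@ex_derive_continuous R_AbsRing R_NormedModule); auto_derive; auto.
    + apply (continuity_2d_pt_comp exp (fun u v => - u * rate a v)).
      * apply continuity_2d_pt_mult;
          [apply continuity_2d_pt_opp, continuity_2d_pt_id1|].
        apply (continuity_2d_pt_rate_snd a (fun r => r)); intros z; apply continuous_id.
      * apply (@ex_derive_continuous R_AbsRing R_NormedModule); auto_derive; auto.
  - apply filter_forall; intros; apply ex_RInt_kernel.
Qed.

Lemma Imom_continuous a k u : continuous (Imom a k) u.
Proof.
  apply (@ex_derive_continuous R_AbsRing R_NormedModule).
  eexists; apply Imom_derive.
Qed.

Lemma Imom_derive_scal a c k u :
  derivable_pt_lim (fun u => c * Imom a k u) u (- c * Imom a (S k) u).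
Proof.
  apply is_derive_Reals.
  replace (- c * Imom a (S k) u) with (c * - Imom a (S k) u) by ring.
  apply (is_derive_scal (Imom a k)), Imom_derive.
Qed.

Lemma Imom_pos a k u : 1 < a -> 0 < Imom a k u.
Proof.
  intros Ha; apply RInt_gt_0; [apply PI_RGT_0| |intros; apply kernel_continuous].
  intros p _; apply Rmult_lt_0_compat; [apply pow_lt, rate_pos; auto|apply exp_pos].
Qed.

Lemma Imom_at_0 a k (P : R -> R) :
  (forall p, is_derive P p (rate a p ^ k)) -> Imom a k 0 = P PI - P 0.
Proof.
  intros HP; unfold Imom; apply is_RInt_unique.
  apply (is_RInt_ext (fun p => rate a p ^ k)).
  { intros p _; unfold kernel; rewrite Ropp_0, Rmult_0_l, exp_0, Rmult_1_r; reflexivity. }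
  apply (@is_RInt_derive R_CompleteNormedModule); intros p _; [apply HP|].
  apply (@ex_derive_continuous R_AbsRing R_NormedModule); unfold rate; auto_derive; auto.
Qed.

Lemma Imom0_at_0 a : Imom a 0 0 = PI.
Proof.
  rewrite (Imom_at_0 a 0 (fun p => p)); [ring|intros p; auto_derive; auto].
Qed.

Lemma Imom1_at_0 a : 1 < a -> Imom a 1 0 = PI * (1 + / a) / 4.
Proof.
  intros Ha; set (A := (1 + / a) / 4); set (B := (/ a - 1) / 4).
  rewrite (Imom_at_0 a 1 (fun p => A * p + B * sin p)).
  - rewrite sin_PI, sin_0; unfold A; field; lra.
  - intros p; auto_derive; auto; unfold rate, A, B; field; lra.
Qed.

Lemma Imom2_at_0 a : 1 < a ->
  Imom a 2 0 = PI * ((1 + / a) / 4) ^ 2 + PI * ((/ a - 1) / 4) ^ 2 / 2.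
Proof.
  intros Ha; set (A := (1 + / a) / 4); set (B := (/ a - 1) / 4).
  rewrite (Imom_at_0 a 2
    (fun p => A ^ 2 * p + 2 * A * B * sin p + B ^ 2 * (p / 2 + sin p * cos p / 2))).
  - rewrite sin_PI, sin_0; field.
  - intros p; auto_derive; auto.
    replace (rate a p) with (A + B * cos p) by (unfold rate, A, B; field; lra).
    pose proof (sin2_cos2 p) as Hsc; unfold Rsqr in Hsc; nra.
Qed.

Definition norm_const (a : R) : R := / (2 * PI * sqrt a).

Lemma norm_const_pos a : 1 < a -> 0 < norm_const a.
Proof.
  intros Ha; unfold norm_const; apply Rinv_0_lt_compat.
  pose proof PI_RGT_0; assert (0 < sqrt a) by (apply sqrt_lt_R0; lra); nra.
Qed.

Definition conv_integrand (a u t : R) : R := chi2_1_pdf t * scaled_chi2_1_pdf a (u - t).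

Definition angle_subst (u p : R) : R := u * (1 - cos p) / 2.

Lemma cos_sin_open p : 0 < p < PI -> -1 < cos p < 1 /\ 0 < sin p.
Proof.
  intros Hp; pose proof (sin_gt_0 p (proj1 Hp) (proj2 Hp)).
  pose proof (sin2_cos2 p); unfold Rsqr in *; split; [split|]; nra.
Qed.

(* Under t = u (1 - cos p)/2 the singular factor 1 / sqrt(t (u - t)) cancels
   the Jacobian u sin p / 2, leaving a multiple of exp(-u q(p)). *)
Lemma conv_integrand_subst a u p : 1 < a -> 0 < u -> 0 < p < PI ->
  (u * sin p / 2) * conv_integrand a u (angle_subst u p) =
  norm_const a * kernel a 0 u p.
Proof.
  intros Ha Hu Hp; destruct (cos_sin_open p Hp) as [[Hc1 Hc2] Hs].
  pose proof (sin2_cos2 p) as Hsc; unfold Rsqr in Hsc; pose proof PI_RGT_0.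
  unfold conv_integrand, chi2_1_pdf, scaled_chi2_1_pdf, norm_const, kernel, angle_subst.
  set (c := cos p) in *; set (s := sin p) in *; set (t := u * (1 - c) / 2).
  assert (Ht : 0 < t) by (unfold t; nra).
  assert (Hut : 0 < (u - t) / a) by (unfold t; apply Rdiv_lt_0_compat; nra).
  assert (Hr : 0 < sqrt a) by (apply sqrt_lt_R0; lra).
  assert (Hra : sqrt a * sqrt a = a) by (apply sqrt_sqrt; lra).
  set (r := sqrt a) in *.
  assert (Hroot : sqrt t * sqrt ((u - t) / a) = u * s / (2 * r)).
  { rewrite <- sqrt_mult by lra; apply sqrt_lem_1; [nra| |].
    - apply Rmult_le_pos; [nra|]; apply Rlt_le, Rinv_0_lt_compat; lra.
    - unfold t; rewrite <- Hra; field_simplify; [|lra|lra].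
      replace (s ^ 2) with (1 - c ^ 2) by nra; field; lra. }
  assert (Hpi : sqrt (2 * PI) * sqrt (2 * PI) = 2 * PI) by (apply sqrt_sqrt; lra).
  assert (Hexp : exp (- t / 2) * exp (- ((u - t) / a) / 2) = exp (- u * rate a p)).
  { rewrite <- exp_plus; f_equal; unfold rate, t; fold c; field; lra. }
  assert (0 < sqrt t) by (apply sqrt_lt_R0; lra).
  assert (0 < sqrt ((u - t) / a)) by (apply sqrt_lt_R0; lra).
  assert (0 < sqrt (2 * PI)) by (apply sqrt_lt_R0; lra).
  transitivity ((u * s / 2) * / (sqrt (2 * PI) * sqrt (2 * PI))
                * / (sqrt t * sqrt ((u - t) / a)) / a
                * (exp (- t / 2) * exp (- ((u - t) / a) / 2))).
  { unfold chi2_1_pdf; field; repeat split; lra. }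
  rewrite Hroot, Hpi, Hexp; clearbody r; subst a; simpl; field; repeat split; lra.
Qed.

Lemma conv_integrand_continuous a u t : 1 < a -> 0 < t < u ->
  continuous (conv_integrand a u) t.
Proof.
  intros Ha Ht; pose proof PI_RGT_0.
  assert (0 < (u - t) / a) by (apply Rdiv_lt_0_compat; lra).
  apply (@ex_derive_continuous R_AbsRing R_NormedModule).
  unfold conv_integrand, scaled_chi2_1_pdf, chi2_1_pdf.
  auto_derive; repeat split; try lra; apply Rgt_not_eq, sqrt_lt_R0; lra.
Qed.

Lemma RInt_angle_subst a u p q : 1 < a -> 0 < u -> 0 < p -> p <= q -> q < PI ->
  RInt (conv_integrand a u) (angle_subst u p) (angle_subst u q) =
  RInt (fun r => norm_const a * kernel a 0 u r) p q.
Proof.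
  intros Ha Hu Hp Hpq Hq.
  assert (Hc : forall r, Rmin p q <= r <= Rmax p q ->
            continuous (conv_integrand a u) (angle_subst u r)).
  { intros r Hr; rewrite Rmin_left, Rmax_right in Hr by lra.
    destruct (cos_sin_open r) as [[? ?] ?]; [lra|].
    apply conv_integrand_continuous; auto; unfold angle_subst; split; nra. }
  assert (Hd : forall r, Rmin p q <= r <= Rmax p q ->
            is_derive (angle_subst u) r (u * sin r / 2) /\
            continuous (fun r => u * sin r / 2) r).
  { intros r _; split.
    - unfold angle_subst; auto_derive; auto; lra.
    - apply (@ex_derive_continuous R_AbsRing R_NormedModule); auto_derive; auto. }
  rewrite <- (is_RInt_unique _ _ _ _ (is_RInt_comp (conv_integrand a u) (angle_subst u)
    (fun r => u * sin r / 2) p q Hc Hd)).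
  apply RInt_ext; intros r Hr; rewrite Rmin_left, Rmax_right in Hr by lra.
  apply conv_integrand_subst; auto; lra.
Qed.

Lemma density_repr a h u : 1 < a -> is_density_sum a h -> 0 < u ->
  h u = norm_const a * Imom a 0 u.
Proof.
  intros Ha hh Hu; pose proof PI_RGT_0.
  assert (Hcont : forall r, continuous (angle_subst u) r).
  { intros r; apply (@ex_derive_continuous R_AbsRing R_NormedModule).
    unfold angle_subst; auto_derive; auto. }
  rewrite (improper_int_subst (conv_integrand a u) (fun r => norm_const a * kernel a 0 u r)
             (angle_subst u) 0 u 0 PI (h u)); auto.
  - unfold Imom; rewrite <- (RInt_scal (V := R_CompleteNormedModule))
      by apply ex_RInt_kernel; reflexivity.
  - intros r; apply (continuous_scal_r (K := R_AbsRing) (V := R_NormedModule)).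
    apply kernel_continuous.
  - unfold angle_subst; rewrite cos_0; field.
  - unfold angle_subst; rewrite cos_PI; field.
  - intros p q Hp Hpq Hq; unfold angle_subst.
    assert (cos q < cos p) by (apply cos_decreasing_1; lra); nra.
  - intros p q Hp Hpq Hq; apply RInt_angle_subst; auto.
  - exact (hh u Hu).
Qed.

(* The smooth extension of h to the whole real line. *)
Definition density (a u : R) : R := norm_const a * Imom a 0 u.

Lemma density_pos a u : 1 < a -> 0 < density a u.
Proof. intros Ha; apply Rmult_lt_0_compat; [apply norm_const_pos|apply Imom_pos]; auto. Qed.

Lemma density_continuous a u : continuous (density a) u.
Proof.
  apply (continuous_scal_r (K := R_AbsRing) (V := R_NormedModule) (norm_const a) (Imom a 0)).
  apply Imom_continuous.
Qed.

(* h is nonincreasing since h' = - I_1 / (2 PI sqrt a) < 0. *)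
Lemma density_nonincreasing a x y : 1 < a -> x <= y -> density a y <= density a x.
Proof.
  intros Ha Hxy; destruct (Rle_lt_or_eq_dec _ _ Hxy) as [Hlt|<-]; [|lra].
  destruct (MVT_cor2 (density a) (fun u => - norm_const a * Imom a 1 u) x y Hlt)
    as [c [Hc _]]; [intros; apply Imom_derive_scal|].
  pose proof (norm_const_pos a Ha); pose proof (Imom_pos a 1 c Ha).
  assert (0 < norm_const a * Imom a 1 c * (y - x)) by (repeat apply Rmult_lt_0_compat; lra).
  lra.
Qed.

Lemma cdf_repr a h F u : 1 < a -> is_density_sum a h ->
  improper_int h 0 u (F u) -> 0 < u -> F u = RInt (density a) 0 u.
Proof.
  intros Ha hh HF Hu; apply (improper_int_continuous h (density a) 0 u); auto.
  - apply density_continuous.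
  - intros t Ht; apply density_repr; auto; lra.
Qed.

(* The cdf is positive and concave (its derivative h decreases), hence log-concave. *)
Lemma cdf_log_concave a h F : 1 < a -> is_density_sum a h ->
  (forall u, 0 < u -> improper_int h 0 u (F u)) -> log_concave_pos F.
Proof.
  intros Ha hh HF; apply (log_concave_of_tangent F (density a)).
  - intros x Hx; rewrite (cdf_repr a h F x) by auto.
    apply RInt_gt_0; auto; intros; [apply density_pos|apply density_continuous]; auto.
  - intros v z Hv Hz.
    rewrite (cdf_repr a h F v), (cdf_repr a h F z) by auto.
    assert (Hdiff : RInt (density a) z v = RInt (density a) 0 v - RInt (density a) 0 z)
      by (apply RInt_difference, density_continuous).
    assert (RInt (density a) z v <= (v - z) * density a z).
    { apply RInt_le_tangent; [apply density_continuous|].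
      intros x y Hx Hy; apply density_nonincreasing; lra. }
    lra.
Qed.

(* I_0 I_2 - I_1^2, so that h h'' - h'^2 = K^2 (I_0 I_2 - I_1^2) with K = norm_const a. *)
Definition curvature (a u : R) : R := Imom a 0 u * Imom a 2 u - Imom a 1 u ^ 2.

Lemma curvature_continuous a u : continuous (curvature a) u.
Proof.
  apply (continuous_minus (V := R_NormedModule)).
  - apply (continuous_mult (K := R_AbsRing)); apply Imom_continuous.
  - apply (continuous_comp (Imom a 1) (fun x => x ^ 2)); [apply Imom_continuous|].
    apply (@ex_derive_continuous R_AbsRing R_NormedModule); auto_derive; auto.
Qed.

Lemma curvature_at_0 a : 1 < a -> curvature a 0 = PI ^ 2 * ((/ a - 1) / 4) ^ 2 / 2.
Proof.
  intros Ha; unfold curvature.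
  rewrite Imom0_at_0, Imom1_at_0, Imom2_at_0 by auto; field; lra.
Qed.

Theorem mainTheorem12 (a2 : R) (ha2 : 1 < a2) (h : R -> R)
  (hh : is_density_sum a2 h) :
  let c2 := 1 - / a2 in
  let p0 := / sqrt a2 in
  let p1 := / 2 * c2 * p0 in
  let p2 := 3 / 8 * c2 ^ 2 * p0 in
  exists h1 h2 : R -> R,
    (forall u, 0 < u -> derivable_pt_lim h u (h1 u) /\ derivable_pt_lim h1 u (h2 u)) /\
    right_lim0 (fun u => h u * h2 u - (h1 u) ^ 2) ((p0 * p2 - p1 ^ 2) / 16) /\
    (p0 * p2 - p1 ^ 2) / 16 > 0 /\
    ~ log_concave_pos h /\
    (forall F : R -> R, (forall u, 0 < u -> improper_int h 0 u (F u)) ->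
       log_concave_pos F).
Proof.
  intros c2 p0 p1 p2; set (K := norm_const a2); set (L := (p0 * p2 - p1 ^ 2) / 16).
  set (h1 := fun u => - K * Imom a2 1 u); set (h2 := fun u => K * Imom a2 2 u).
  exists h1, h2.
  assert (Hrepr : forall u, 0 < u -> h u = density a2 u) by (intros; apply density_repr; auto).
  assert (Hderiv : forall u, 0 < u ->
            derivable_pt_lim h u (h1 u) /\ derivable_pt_lim h1 u (h2 u)).
  { intros u Hu; split; [apply (derivable_pt_lim_pos_ext h (density a2)); auto|];
      [apply Imom_derive_scal|].
    replace (h2 u) with (- - K * Imom a2 2 u) by (unfold h2; ring); apply Imom_derive_scal. }
  (* The announced limit is the value at 0 of the continuous K^2 (I_0 I_2 - I_1^2). *)
  assert (Hsq : 0 < sqrt a2) by (apply sqrt_lt_R0; lra).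
  assert (HL : L = K ^ 2 * curvature a2 0).
  { rewrite curvature_at_0 by auto; unfold L, K, norm_const, p1, p2, c2, p0.
    assert (Hra : sqrt a2 * sqrt a2 = a2) by (apply sqrt_sqrt; lra); pose proof PI_RGT_0.
    set (r := sqrt a2) in *; clearbody r; subst a2; field; lra. }
  assert (Hlim : right_lim0 (fun u => h u * h2 u - h1 u ^ 2) L).
  { rewrite HL; apply (right_lim0_continuous _ (fun u => K ^ 2 * curvature a2 u)).
    - apply (continuous_scal_r (K := R_AbsRing) (V := R_NormedModule)), curvature_continuous.
    - intros u Hu; rewrite Hrepr by auto; unfold h1, h2, density, curvature; fold K; ring. }
  assert (HLpos : L > 0).
  { assert (0 < c2)
      by (unfold c2; apply Rlt_0_minus; rewrite <- Rinv_1; apply Rinv_lt_contravar; lra).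
    assert (0 < p0) by (apply Rinv_0_lt_compat; auto).
    replace L with (p0 * p0 * c2 * c2 / 128) by (unfold L, p1, p2; field).
    apply Rdiv_lt_0_compat; [repeat apply Rmult_lt_0_compat|]; lra. }
  split; [exact Hderiv|split; [exact Hlim|split; [exact HLpos|split]]].
  - destruct (right_lim0_pos_near _ L Hlim HLpos) as [d [Hd Hcurv]].
    apply (not_log_concave_near0 h h1 h2 d Hd); intros u Hu.
    destruct (Hderiv u (proj1 Hu)); repeat split; auto.
    rewrite Hrepr by lra; apply density_pos; auto.
  - intros F HF; exact (cdf_log_concave a2 h F ha2 hh HF).
Qed.
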